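(* For every fixed integer $d\geq 2$ there exist constants $c_1,c_2>0$ (depending only on $d$) such that for all integers $n_1\geq n_2\geq\dots\geq n_d\geq 1$ with $n_1\geq 2$, $$c_1\prod_{j=2}^d n_j\leq \operatorname{tw}(P_{n_1}\square\cdots\square P_{n_d})\leq \operatorname{tw}(P_{n_1}\boxtimes\cdots\boxtimes P_{n_d})\leq c_2\prod_{j=2}^d n_j.$$
   Context: $P_n$ denotes the path on $n$ vertices and $\operatorname{tw}$ denotes treewidth. The cartesian product $G \square H$ has vertex set $V(G)\times V(H)$, with $(a,v)(b,u)$ an edge iff either $ab\in E(G)$ and $u=v$, or $uv\in E(H)$ and $a=b$. The strong product $G\boxtimes H$ has the same vertex set, with distinct vertices $(a,v),(b,u)$ adjacent iff ($a=b$ or $ab\in E(G)$) and ($u=v$ or $uv\in E(H)$). *)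

From mathcomp Require Import all_boot.
From Stdlib Require Import ClassicalEpsilon.
Set Implicit Arguments.
Unset Strict Implicit.
Unset Printing Implicit Defensive.

(* A tree on a finite node type I: symmetric, irreflexive, connected,
   with exactly #|I| - 1 (unordered) edges, i.e. 2 (#|I| - 1) ordered pairs. *)
Definition is_tree (I : finType) (e : rel I) : Prop :=
  [/\ symmetric e, irreflexive e,
      (forall x y : I, connect e x y) &
      #|[set p : I * I | e p.1 p.2]| = 2 * (#|I| - 1)].

Definition is_tree_decomposition (V : finType) (adj : rel V)
    (I : finType) (e : rel I) (B : I -> {set V}) : Prop :=
  [/\ is_tree e,
      (forall v : V, exists i : I, v \in B i),
      (forall u v : V, adj u v -> exists i : I, (u \in B i) && (v \in B i)) &
      (forall v : V, forall i j : I, v \in B i -> v \in B j ->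
         connect [rel x y | [&& e x y, v \in B x & v \in B y]] i j)].

Definition has_td_width (V : finType) (adj : rel V) (k : nat) : Prop :=
  exists (I : finType) (e : rel I) (B : I -> {set V}),
    is_tree_decomposition adj e B /\ forall i : I, #|B i| <= k.+1.

Lemma has_td_width_exists (V : finType) (adj : rel V) :
  exists k, (fun k => if excluded_middle_informative (has_td_width adj k)
                      then true else false) k.
Proof.
exists #|V|.
case: excluded_middle_informative => // [[]].
exists unit, (fun _ _ => false), (fun _ => [set: V]); split; last first.
  by move=> _; rewrite cardsT.
split.
- split => //; first by move=> [] [].
  rewrite card_unit /=.
  apply/eqP; rewrite cards_eq0; apply/eqP/setP => p; by rewrite !inE.
- by move=> v; exists tt; rewrite inE.
- by move=> u v _; exists tt; rewrite !inE.
- by move=> v [] [] _ _; exact: connect0.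
Qed.

Definition treewidth (V : finType) (adj : rel V) : nat :=
  ex_minn (has_td_width_exists adj).

Definition grid_vertex (d : nat) (n : 'I_d -> nat) : finType :=
  {dffun forall i : 'I_d, 'I_(n i)}.

Definition path_adj (a b : nat) : bool := (a == b.+1) || (b == a.+1).

Definition cart_adj (d : nat) (n : 'I_d -> nat) : rel (grid_vertex n) :=
  fun x y => [exists i : 'I_d, path_adj (x i) (y i) &&
                [forall j : 'I_d, (j != i) ==> ((x j : nat) == y j)]].

Definition strong_adj (d : nat) (n : 'I_d -> nat) : rel (grid_vertex n) :=
  fun x y => (x != y) &&
    [forall i : 'I_d, ((x i : nat) == y i) || path_adj (x i) (y i)].

Arguments cart_adj {d} n.
Arguments strong_adj {d} n.

(* Upper bound: slicing the strong product along the longest coordinate gives a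
   path decomposition whose bags are two consecutive slices, of size at most
   2 * prod_(j >= 2) n_j; the cartesian product is a subgraph of the strong one.
   Lower bound: by the Helly property of subtrees of a tree, every tree
   decomposition has a bag S such that each component of G - S has at most
   |V|/2 vertices.  Join u to v by the monotone route that adjusts the
   coordinates one at a time; if it misses S, then u and v are in the same
   component, so at least half of the |V|^2 pairs have routes meeting S.  A
   vertex lies on the routes of at most d |V| n_1 pairs, hence
   |V|^2 <= 2 |S| d |V| n_1, i.e. prod_(j >= 2) n_j <= 2 d (tw + 1) <= 4 d tw. *)

From mathcomp Require Import all_boot zify.
From Stdlib Require Import ClassicalEpsilon Reals Lra.
Set Implicit Arguments.
Unset Strict Implicit.
Unset Printing Implicit Defensive.

Lemma card_fibers (T : finType) (A : {set T * T}) :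
  #|A| = \sum_(x : T) #|[set y | (x, y) \in A]|.
Proof.
rewrite -sum1_card.
rewrite (eq_bigr (fun x => \sum_(y | (x, y) \in A) 1)); last first.
  by move=> x _; rewrite -sum1_card; apply: eq_bigl => y; rewrite inE.
by rewrite pair_big_dep /=; apply: eq_bigl => -[x y].
Qed.

Lemma card_bigcup_le (J T : finType) (P : pred J) (F : J -> {set T}) :
  #|\bigcup_(j | P j) F j| <= \sum_(j | P j) #|F j|.
Proof.
elim/big_rec2: _ => [|j y X _ H]; first by rewrite cards0.
by rewrite cardsU (leq_trans (leq_subr _ _)) // leq_add2l.
Qed.

Section SubtreeHelly.
Variables (I : finType) (e : rel I).
Hypotheses (e_sym : symmetric e) (e_irr : irreflexive e).

Definition rel_on (U : {set I}) : rel I := fun x y => [&& e x y, x \in U & y \in U].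
Arguments rel_on U x y /.
Definition connected_on (U : {set I}) := {in U &, forall x y, connect (rel_on U) x y}.
Definition tree_on (U : {set I}) :=
  connected_on U /\ #|[set a : I * I | rel_on U a.1 a.2]| = 2 * (#|U| - 1).
Definition is_leaf (U : {set I}) (l p : I) :=
  [/\ l \in U, p \in U, e l p & {in U, forall q, e l q -> q = p}].

Lemma connect_rel_on_subset (A B : {set I}) :
  A \subset B -> subrel (connect (rel_on A)) (connect (rel_on B)).
Proof.
move=> AB; apply: connect_sub => x y /and3P[exy xA yA]; apply: connect1.
by rewrite /= exy (subsetP AB _ xA) (subsetP AB _ yA).
Qed.

(* A path through the leaf l would visit its only neighbour p twice, so a
   shortest path between other vertices avoids l. *)
Lemma connect_rel_on_setD1 (A : {set I}) l p x y :
  {in A, forall q, e l q -> q = p} -> x != l -> y != l ->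
  connect (rel_on A) x y -> connect (rel_on (A :\ l)) x y.
Proof.
move=> Hl Hx Hy /connectP [s Hp Ey]; subst y; move: Hy.
case: (shortenP Hp) => {Hp} s Hp Hu _ Hy.
have Hls : l \notin s.
  apply/negP => /splitPr Hs; move: Hs Hp Hu Hy => [s1 s2].
  rewrite cat_path last_cat /= => /andP[_ /andP[/and3P[ea aA lA] Hp2]].
  case: s2 Hp2 => [|b s3] /=; first by rewrite eqxx.
  move=> /andP[/and3P[elb _ bA] _] Hu _.
  have Ea : last x s1 = p by apply: Hl => //; rewrite e_sym.
  have Eb : b = p by apply: Hl.
  case/andP: Hu => xn; rewrite cat_uniq => /and3P[_ H _].
  have := mem_last x s1; rewrite inE Ea -Eb => /orP [/eqP bx | bs1].
    by move: xn; rewrite -bx mem_cat !inE eqxx !orbT.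
  by case/negP: H; apply/hasP; exists b => //; rewrite !inE eqxx orbT.
apply/connectP; exists s => //.
elim: s x Hx Hp Hls {Hu Hy} => //= z s IH x Hx /andP[/and3P[exz xA zA] Hp].
rewrite inE negb_or => /andP[zl Hls]; rewrite eq_sym in zl.
apply/andP; split; first by rewrite /= !inE exz Hx zl xA zA.
exact: IH.
Qed.

Lemma connected_leaf_neighbor (U A : {set I}) l p z :
  A \subset U -> connected_on A -> {in U, forall q, e l q -> q = p} ->
  l \in A -> z \in A -> z != l -> p \in A.
Proof.
move=> AU cA Hl lA zA zl.
have /connectP [[|q s] /= Hp Ez] := cA l z lA zA; first by rewrite Ez eqxx in zl.
case/andP: Hp => /and3P[elq _ qA] _.
by rewrite -(Hl q (subsetP AU _ qA) elq).
Qed.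

(* Every vertex of degree at least 2 would give at least 2 #|U| arcs. *)
Lemma tree_on_leaf U : tree_on U -> 1 < #|U| -> exists l p, is_leaf U l p.
Proof.
move=> [cU nU] U2.
have [/existsP [l /andP [lU degl]] | H] :=
  boolP [exists l, (l \in U) && (#|[set y in U | e l y]| <= 1)]; last first.
  exfalso; move: nU; rewrite card_fibers.
  have : \sum_(x in U) 2 <=
         \sum_(x : I) #|[set y | (x, y) \in [set a : I * I | rel_on U a.1 a.2]]|.
    rewrite [X in _ <= X](bigID (fun x => x \in U)) /= -[X in X <= _]addn0.
    apply: leq_add => //; apply: leq_sum => x xU.
    move/existsPn: H => /(_ x); rewrite xU /= -ltnNge => /leq_trans; apply.
    apply: subset_leq_card; apply/subsetP => y; rewrite !inE /= xU.
    by case/andP=> -> ->.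
  rewrite sum_nat_const => + E; rewrite E; lia.
have [y yU yl] : exists2 y, y \in U & y != l.
  apply/exists_inP; apply: contraLR U2 => /exists_inPn H; rewrite -leqNgt.
  apply/card_le1_eqP => a b aU bU.
  by move: (H a aU) (H b bU); rewrite !negbK => /eqP -> /eqP ->.
have /connectP [[|q s] /= Hp Ey] := cU l y lU yU; first by rewrite Ey eqxx in yl.
case/andP: Hp => /and3P[elq _ qU] _.
exists l, q; split => // q' q'U elq'.
move/card_le1_eqP: degl => /(_ q' q); rewrite !inE q'U qU elq elq'.
by move=> /(_ isT isT).
Qed.

Lemma leaf_neq U l p : is_leaf U l p -> p != l.
Proof. by case=> _ _ elp _; apply: contraTneq elp => ->; rewrite e_irr. Qed.

Lemma tree_on_setD1_leaf U l p : tree_on U -> is_leaf U l p -> tree_on (U :\ l).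
Proof.
move=> [cU nU] leaf; have pl := leaf_neq leaf; case: leaf => lU pU elp Hl.
split.
  move=> x y; rewrite !inE => /andP[xl xU] /andP[yl yU].
  exact: (connect_rel_on_setD1 Hl xl yl (cU x y xU yU)).
have E : [set a : I * I | rel_on U a.1 a.2] =
         [set a : I * I | rel_on (U :\ l) a.1 a.2] :|: [set (l, p); (p, l)].
  apply/setP => -[a b]; rewrite !inE /= !inE !xpair_eqE.
  have [-> | al] := eqVneq a l.
    rewrite lU (eq_sym l p) (negbTE pl) /= ?andbT ?andbF ?orbF /=.
    apply/idP/idP => [/andP[elb bU]|/eqP ->]; first by rewrite (Hl b bU elb).
    by rewrite elp pU.
  have [-> | bl] := eqVneq b l.
    rewrite lU /= ?andbT ?andbF ?orbF /=.
    apply/idP/idP => [/andP [eal aU] | /eqP ->]; last by rewrite e_sym elp pU.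
    by rewrite (Hl a aU) // e_sym.
  by rewrite /= ?andbT ?andbF ?orbF.
have D : [disjoint [set a : I * I | rel_on (U :\ l) a.1 a.2] & [set (l, p); (p, l)]].
  rewrite -setI_eq0; apply/eqP/setP => -[a b]; rewrite !inE /= !inE !xpair_eqE.
  by case: (a =P l) => [->|_]; case: (b =P l) => [->|_] /=;
    rewrite ?andbF ?andbT ?orbF //= ?eqxx ?andbF.
move: D nU; rewrite -setI_eq0 E cardsU => /eqP ->; rewrite cards0 subn0 cards2.
have -> : (l, p) != (p, l) by apply: contraNneq pl => [[->]].
rewrite (cardsD1 l U) lU; lia.
Qed.

Section LeafContraction.
Variables (U : {set I}) (l p : I).
Hypothesis leaf : is_leaf U l p.

Definition contract_leaf (S : {set I}) : {set I} :=
  (S :\ l) :|: (if l \in S then [set p] else set0).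

Lemma contract_leaf_subset (S : {set I}) : S \subset U -> contract_leaf S \subset U :\ l.
Proof.
move=> SU; have pl := leaf_neq leaf; case: leaf => _ pU _ _.
apply/subsetP => z; rewrite /contract_leaf !inE.
case/orP => [/andP [-> zS] | ]; first by rewrite (subsetP SU _ zS).
by case: (l \in S); rewrite !inE // => /eqP ->; rewrite pl.
Qed.

Lemma contract_leaf_neq0 (S : {set I}) : S != set0 -> contract_leaf S != set0.
Proof.
move=> /set0Pn [z zS]; apply/set0Pn; rewrite /contract_leaf.
case lS: (l \in S); first by exists p; rewrite !inE eqxx orbT.
exists z; rewrite !inE zS andbT ?orbF.
by apply: contraFneq lS => <-.
Qed.

Lemma contract_leaf_meet (S S' : {set I}) :
  S :&: S' != set0 -> contract_leaf S :&: contract_leaf S' != set0.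
Proof.
case/set0Pn => z /setIP [zS zS']; apply/set0Pn.
have [Ez | zl] := eqVneq z l.
  by subst z; exists p; rewrite /contract_leaf inE zS zS' !inE eqxx !orbT.
by exists z; rewrite /contract_leaf !inE zl zS zS'.
Qed.

Lemma mem_contract_leaf (S : {set I}) c :
  S \subset U -> connected_on S -> ~~ (S \subset [set l]) ->
  c \in contract_leaf S -> c \in S.
Proof.
move=> SU cS /subsetPn [z zS]; rewrite inE => zl; case: leaf => _ _ _ Hl.
rewrite /contract_leaf; case lS: (l \in S); rewrite !inE ?orbF; last by case/andP.
case/orP => [/andP[_ ->] // | /eqP ->].
exact: connected_leaf_neighbor SU cS Hl lS zS zl.
Qed.

Lemma contract_leaf_connected (S : {set I}) : S \subset U -> connected_on S ->
  connected_on (contract_leaf S).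
Proof.
move=> SU cS x y; have Hl : {in U, forall q, e l q -> q = p} by case: leaf.
have sub : S :\ l \subset contract_leaf S by apply/subsetP => z zS; rewrite inE zS.
have [Sl | nSl] := boolP (S \subset [set l]).
  have Ep w : w \in contract_leaf S -> w = p.
    rewrite /contract_leaf !inE => /orP [/andP [wl /(subsetP Sl)] | ].
      by rewrite inE (negbTE wl).
    by case: (l \in S); rewrite ?inE // => /eqP.
  by move=> /Ep -> /Ep ->; exact: connect0.
move=> xS yS; have xS' := mem_contract_leaf SU cS nSl xS.
have yS' := mem_contract_leaf SU cS nSl yS.
have Hxl w : w \in contract_leaf S -> w != l.
  by rewrite /contract_leaf !inE => /orP [/andP [] | ]; last case: (l \in S);
    rewrite ?inE // => /eqP ->; exact: leaf_neq leaf.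
apply: (connect_rel_on_subset sub).
apply: (connect_rel_on_setD1 (p := p)); rewrite ?Hxl //; last exact: cS.
by move=> q qS; apply: Hl; exact: (subsetP SU _ qS).
Qed.

End LeafContraction.

(* Induction on #|U|: delete a leaf l, moving l to its neighbour in every subtree. *)
Lemma subtree_helly (J : finType) (P : pred J) (U : {set I}) (S : J -> {set I}) :
  tree_on U -> U != set0 ->
  (forall j, P j -> [/\ S j \subset U, S j != set0 & connected_on (S j)]) ->
  (forall j j', P j -> P j' -> S j :&: S j' != set0) ->
  exists2 c, c \in U & forall j, P j -> c \in S j.
Proof.
have [m Hm] := ubnP #|U|; elim: m U S Hm => // m IH U S Hm tU U0 HS SS.
case/set0Pn: U0 => c0 c0U.
have [U1 | U2] := leqP #|U| 1.
  exists c0 => // j /HS [SU /set0Pn [z zS] _].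
  by rewrite -(card_le1_eqP U1 c0 z c0U (subsetP SU _ zS)).
have [l [p leaf]] := tree_on_leaf tU U2.
have [c cU' cS'] : exists2 c, c \in U :\ l & forall j, P j -> c \in contract_leaf l p (S j).
  apply: (IH (U :\ l)); first by move: Hm; rewrite (cardsD1 l U); case: leaf => ->.
  - exact: tree_on_setD1_leaf leaf.
  - by apply/set0Pn; exists p; rewrite !inE (leaf_neq leaf); case: leaf.
  - move=> j /HS [SU S0 cS]; split.
    + exact: contract_leaf_subset.
    + exact: contract_leaf_neq0.
    + exact: (contract_leaf_connected leaf).
  - by move=> j j' Pj Pj'; apply: contract_leaf_meet; apply: SS.
have [/existsP [j0 /andP [Pj0 Sj0]] | /existsPn H] :=
  boolP [exists j, P j && (S j \subset [set l])].
  exists l; first by case: leaf.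
  move=> j Pj; case/set0Pn: (SS j j0 Pj Pj0) => z /setIP [zj zj0].
  by move: (subsetP Sj0 _ zj0); rewrite inE => /eqP <-.
exists c; first by move: cU'; rewrite inE => /andP[].
move=> j Pj; have [SU _ cS] := HS j Pj.
by apply: (mem_contract_leaf leaf SU cS _ (cS' j Pj)); move: (H j); rewrite Pj.
Qed.

End SubtreeHelly.
Arguments rel_on {I} e U x y /.

Section Separators.
Variables (V : finType) (adj : rel V).

Definition avoiding (S : {set V}) : rel V :=
  fun a b => [&& adj a b, a \notin S & b \notin S].
Definition component_avoiding (S : {set V}) (u : V) := [set v | connect (avoiding S) u v].
Definition balanced_separator (S : {set V}) :=
  forall u, u \notin S -> 2 * #|component_avoiding S u| <= #|V|.

Lemma component_avoiding_notin (S : {set V}) u v :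
  u \notin S -> v \in component_avoiding S u -> v \notin S.
Proof.
move=> uS; rewrite inE => /connectP [s Hs ->]; move: Hs.
case/lastP: s => [|s w] //=; rewrite rcons_path last_rcons.
by case/andP => _ /and3P [].
Qed.

Section TreeDecomposition.
Variables (I : finType) (e : rel I) (B : I -> {set V}).
Hypothesis td : is_tree_decomposition adj e B.

Definition subtree (M : {set V}) := [set i | [exists v in M, v \in B i]].

Lemma td_tree : [/\ symmetric e, irreflexive e & tree_on e setT].
Proof.
case: td => -[e_sym e_irr c n] _ _ _; split => //; split.
  move=> x y _ _; rewrite (@eq_connect _ _ e) ?c // => a b; by rewrite /= ?inE ?andbT.
rewrite cardsT -n; apply: eq_card => -[a b]; by rewrite !inE /= ?inE ?andbT.
Qed.

Lemma connect_subtree (M : {set V}) v i j : v \in M -> v \in B i -> v \in B j ->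
  connect (rel_on e (subtree M)) i j.
Proof.
case: td => _ _ _ H vM vi vj.
apply: connect_sub (H v i j vi vj) => a b /= /and3P [eab va vb].
apply: connect1; rewrite /= eab !inE /=.
by apply/andP; split; apply/exists_inP; exists v.
Qed.

Lemma connected_subtree (R : rel V) u : subrel R adj ->
  connected_on e (subtree [set v | connect R u v]).
Proof.
move=> Rs; set M := [set v | connect R u v].
case: td => _ cov ecov _; have [e_sym _ _] := td_tree.
have [i0 ui0] := cov u.
have uM : u \in M by rewrite inE connect0.
have reach v : v \in M -> forall i, v \in B i -> connect (rel_on e (subtree M)) i0 i.
  rewrite inE => /connectP [s Hs ->]; move: Hs.
  elim/last_ind: s => [|s w IH] /=; first by move=> _ i ui; exact: connect_subtree uM ui0 ui.
  rewrite rcons_path last_rcons => /andP [Hs Rw] i wi.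
  have /ecov [k /andP [ak wk]] := Rs _ _ Rw.
  apply: connect_trans (IH Hs k ak) _.
  apply: (connect_subtree (v := w)) => //; rewrite inE.
  by apply/connectP; exists (rcons s w); rewrite ?rcons_path ?Hs ?Rw ?last_rcons.
move=> x y; rewrite !inE => /exists_inP [a aM ax] /exists_inP [b bM bx].
apply: connect_trans (reach b bM y bx).
rewrite sym_connect_sym ?(reach a aM x ax) // => i j.
by rewrite /= e_sym; case: (e j i); case: (i \in subtree M); case: (j \in subtree M).
Qed.

(* Two components with more than half of the vertices meet, so the subtrees of
   all large components pairwise intersect; a common node c of these subtrees
   cannot have a large component of G - B c, which would avoid the bag B c. *)
Lemma balanced_separator_bag (v0 : V) : exists c : I, balanced_separator (B c).
Proof.
pose large (j : I * V) :=
  (j.2 \notin B j.1) && (#|V| < 2 * #|component_avoiding (B j.1) j.2|).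
pose S (j : I * V) := subtree (component_avoiding (B j.1) j.2).
case: td => _ cov _ _; have [e_sym e_irr tT] := td_tree.
have [c _ Hc] : exists2 c, c \in [set: I] & forall j, large j -> c \in S j.
  apply: (subtree_helly e_sym e_irr tT).
  - by apply/set0Pn; have [i _] := cov v0; exists i; rewrite inE.
  - move=> [i u] _; split; [exact: subsetT | | ].
      apply/set0Pn; have [k uk] := cov u; exists k.
      by rewrite inE; apply/exists_inP; exists u; rewrite // inE connect0.
    by apply: connected_subtree => a b /and3P [].
  - move=> [i u] [i' u'] /andP [_ H1] /andP [_ H2]; apply/set0Pn.
    have : 0 < #|component_avoiding (B i) u :&: component_avoiding (B i') u'|.
      have := cardsUI (component_avoiding (B i) u) (component_avoiding (B i') u').
      have := subset_leq_card (subsetT (component_avoiding (B i) u :|: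
                                         component_avoiding (B i') u')).
      rewrite cardsT /= -cardsT in H1 H2 *; lia.
    case/card_gt0P => z /setIP [z1 z2].
    have [k zk] := cov z; exists k; rewrite !inE.
    by apply/andP; split; apply/exists_inP; exists z.
exists c => u uB; rewrite leqNgt; apply/negP => Hb.
have /Hc : large (c, u) by rewrite /large uB Hb.
rewrite inE => /exists_inP [v vM vc].
by move: (component_avoiding_notin uB vM); rewrite vc.
Qed.

End TreeDecomposition.
End Separators.

Lemma treewidth_spec (V : finType) (adj : rel V) : has_td_width adj (treewidth adj).
Proof.
rewrite /treewidth; case: ex_minnP => m + _.
by case: excluded_middle_informative.
Qed.

Lemma treewidth_min (V : finType) (adj : rel V) k :
  has_td_width adj k -> treewidth adj <= k.
Proof.
move=> H; rewrite /treewidth; case: ex_minnP => m _; apply.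
by case: excluded_middle_informative.
Qed.

Lemma treewidth_subrel (V : finType) (adj adj' : rel V) :
  subrel adj adj' -> treewidth adj <= treewidth adj'.
Proof.
move=> sub; apply: treewidth_min.
have [I [e [B [[t c ec sc] Hk]]]] := treewidth_spec adj'.
by exists I, e, B; split => //; split => // u v /sub; exact: ec.
Qed.

Lemma treewidth_gt0 (V : finType) (adj : rel V) x y :
  adj x y -> x != y -> 0 < treewidth adj.
Proof.
move=> xy; rewrite lt0n; apply: contraNneq => tw0.
have [I [e [B [[_ _ ecov _] Hk]]]] := treewidth_spec adj.
have [i /andP [xB yB]] := ecov x y xy.
by move: (Hk i); rewrite tw0 => /card_le1_eqP H; rewrite (H x y xB yB).
Qed.

Section Grid.
Variables (d : nat) (n : 'I_d -> nat).
Notation V := (grid_vertex n).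

Lemma grid_vertex_eq (x y : V) : (forall i, (x i : nat) = y i) -> x = y.
Proof. by move=> H; apply/ffunP => i; apply: val_inj; apply: H. Qed.

Lemma card_grid_vertex : #|V| = \prod_(i < d) n i.
Proof.
rewrite card_dep_ffun foldrE big_map big_enum /=; apply: eq_bigr => i _.
exact: card_ord.
Qed.

Lemma cart_adj_sym : symmetric (cart_adj n).
Proof.
move=> x y; apply/existsP/existsP => -[i /andP [H1 /forallP H2]];
  exists i; move: H1; rewrite /path_adj orbC => -> /=; apply/forallP => j;
  by move: (H2 j); case: (j != i) => //= /eqP ->.
Qed.

Lemma cart_subrel_strong : subrel (cart_adj n) (strong_adj n).
Proof.
move=> x y /existsP [i /andP [pa /forallP H]]; apply/andP; split.
  by apply: contraTneq pa => ->; rewrite /path_adj orbb ltn_eqF.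
apply/forallP => j; case: (eqVneq j i) => [->|ji]; first by rewrite pa orbT.
by rewrite (implyP (H j) ji).
Qed.

(* Out-of-range values leave the coordinate unchanged. *)
Definition set_coord (x : V) (i : 'I_d) (t : nat) : V :=
  [ffun j => if j == i then insubd (x j) t else x j].

Lemma set_coordE (x : V) i t j :
  (set_coord x i t j : nat) = if j == i then (if t < n j then t else x j) else x j.
Proof. by rewrite ffunE; case: (j == i) => //; rewrite val_insubd. Qed.

Definition on_line (x : V) (i : 'I_d) (y : V) :=
  [forall j : 'I_d, (j != i) ==> ((y j : nat) == x j)].

Lemma connect_on_line (R : rel V) (x : V) (i : 'I_d) : symmetric R ->
  (forall a b, on_line x i a -> on_line x i b -> cart_adj n a b -> R a b) ->
  forall y, on_line x i y -> connect R x y.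
Proof.
move=> Rsym HR.
have n0 : 0 < n i by apply: leq_ltn_trans (ltn_ord (x i)).
have line_set y t : on_line x i y -> on_line x i (set_coord y i t).
  move=> /forallP H; apply/forallP => j; apply/implyP => ji.
  by rewrite set_coordE (negbTE ji); apply: (implyP (H j)).
have xl : on_line x i x by apply/forallP => j; apply/implyP.
pose z := set_coord x i 0.
have from_z t y : on_line x i y -> (y i : nat) = t -> connect R z y.
  elim: t y => [|t IH] y yl yi.
    suff -> : y = z by exact: connect0.
    apply: grid_vertex_eq => j; rewrite set_coordE.
    case: eqP => [->|/eqP ji]; first by rewrite n0 yi.
    by apply/eqP; apply: (implyP (forallP yl j)).
  have tn : t < n i by have := ltn_ord (y i); rewrite yi => /ltnW.
  apply: connect_trans (IH _ (line_set y t yl) _) (connect1 _).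
    by rewrite set_coordE eqxx tn.
  apply: HR (line_set y t yl) yl _; apply/existsP; exists i; apply/andP; split.
    by rewrite /path_adj set_coordE eqxx tn yi eqxx orbT.
  by apply/forallP => j; apply/implyP => ji; rewrite set_coordE (negbTE ji).
move=> y yl; apply: connect_trans (from_z _ y yl erefl).
by rewrite (sym_connect_sym Rsym) (from_z _ x xl erefl).
Qed.

(* The monotone route from u to v changes the coordinates one at a time, in
   increasing order; w lies on it at the stage where coordinate i is moving. *)
Definition route_stage (u v w : V) (i : 'I_d) :=
  [forall j : 'I_d,
     ((j < i) ==> ((w j : nat) == v j)) && ((i < j) ==> ((w j : nat) == u j))].
Definition on_route (u v w : V) := [exists i, route_stage u v w i].

Definition route_prefix (u v : V) (k : nat) : V :=
  [ffun j : 'I_d => if j < k then v j else u j].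

Lemma connect_along_route (R : rel V) (u v : V) : symmetric R ->
  (forall a b, on_route u v a -> on_route u v b -> cart_adj n a b -> R a b) ->
  connect R u v.
Proof.
move=> Rsym HR.
suff : forall k, k <= d -> connect R u (route_prefix u v k).
  move=> /(_ d (leqnn d)); congr connect.
  by apply/ffunP => j; rewrite ffunE ltn_ord.
elim => [|k IH] kd.
  suff -> : route_prefix u v 0 = u by exact: connect0.
  by apply/ffunP => j; rewrite ffunE.
apply: connect_trans (IH (ltnW kd)) _.
pose i := Ordinal kd.
have line_route y : on_line (route_prefix u v k) i y -> on_route u v y.
  move=> /forallP yl; apply/existsP; exists i; apply/forallP => j.
  have := implyP (yl j); rewrite ffunE -val_eqE /=.
  by case: (ltngtP j k) => //= _ /(_ isT) /eqP ->; rewrite eqxx.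
apply: (connect_on_line (i := i)) Rsym _ _ _.
  by move=> a b al bl; apply: HR; apply: line_route.
apply/forallP => j; apply/implyP => ji; rewrite !ffunE.
have : (j : nat) != k by [].
by rewrite ltnS leq_eqVlt => /negbTE ->.
Qed.

(* Given its stage i, a vertex w on the route from u to v determines u and v
   up to the single coordinate v i. *)
Lemma card_route_stage (w : V) (i : 'I_d) :
  #|[set uv : V * V | route_stage uv.1 uv.2 w i]| <= #|V| * n i.
Proof.
pose f (uv : V * V) : V * 'I_(n i) :=
  ([ffun j : 'I_d => if j <= i then uv.1 j else uv.2 j], uv.2 i).
have -> : #|V| * n i = #|{: V * 'I_(n i)}| by rewrite card_prod card_ord.
apply: (@leq_card_in _ _ f) => -[u v] [u' v']; rewrite !inE /=.
move=> /forallP H /forallP H' [Ez Ei].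
have Ez' (j : 'I_d) : (if j <= i then (u j : nat) else v j) =
                      (if j <= i then (u' j : nat) else v' j).
  by have := congr1 (fun g : V => (g j : nat)) Ez; rewrite /= !ffunE; case: (j <= i).
congr pair; apply: grid_vertex_eq => j.
  case: (leqP j i) => ji; first by have := Ez' j; rewrite ji.
  have /andP [_ h] := H j; have /andP [_ h'] := H' j.
  by move: h h'; rewrite ji /= => /eqP <- /eqP <-.
case: (ltngtP j i) => ji.
- have /andP [h _] := H j; have /andP [h' _] := H' j.
  by move: h h'; rewrite ji /= => /eqP <- /eqP <-.
- by have := Ez' j; rewrite leqNgt ji.
- by rewrite (_ : j = i) ?Ei //; apply: val_inj.
Qed.

Definition route_hitting (S : {set V}) :=
  [set uv : V * V | [exists w in S, on_route uv.1 uv.2 w]].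

Lemma card_route_hitting (S : {set V}) (m : nat) : (forall i, n i <= m) ->
  #|route_hitting S| <= #|S| * (d * (#|V| * m)).
Proof.
move=> Hm; apply: (@leq_trans #|\bigcup_(w in S) \bigcup_(i < d)
                                 [set uv : V * V | route_stage uv.1 uv.2 w i]|).
  apply: subset_leq_card; apply/subsetP => -[u v].
  rewrite inE => /exists_inP [w wS /existsP [i Hi]].
  by apply/bigcupP; exists w => //; apply/bigcupP; exists i; rewrite ?inE.
apply: (leq_trans (card_bigcup_le _ _)).
rewrite -sum_nat_const; apply: leq_sum => w _.
apply: (leq_trans (card_bigcup_le _ _)).
rewrite -[X in X * _](card_ord d) -sum_nat_const; apply: leq_sum => i _.
by apply: leq_trans (card_route_stage w i) _; rewrite leq_mul2l Hm orbT.
Qed.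

(* A pair whose route misses S lies in one component of the grid minus S. *)
Lemma card_route_missing (S : {set V}) : 0 < d ->
  balanced_separator (cart_adj n) S -> 2 * #|~: route_hitting S| <= #|V| * #|V|.
Proof.
move=> d0 Hbal; set R := avoiding (cart_adj n) S.
have Rsym : symmetric R.
  by move=> a b; rewrite /R /avoiding cart_adj_sym; case: (a \in S); case: (b \in S).
have on_route_src u v : on_route u v u.
  apply/existsP; exists (Ordinal d0); apply/forallP => j /=.
  by rewrite eqxx implybT.
rewrite card_fibers big_distrr /=.
have -> : #|V| * #|V| = \sum_(u : V) #|V| by rewrite sum_nat_const cardT -cardE.
apply: leq_sum => u _.
have missing v : (u, v) \in ~: route_hitting S -> (u \notin S) /\ connect R u v.
  rewrite !inE negb_exists => /forallP Hn.
  have nS w : on_route u v w -> w \notin S.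
    by move=> Hw; apply/negP => wS; move: (Hn w); rewrite wS Hw.
  split; first exact: nS (on_route_src u v).
  apply: connect_along_route Rsym _ => a b ar br ab.
  by rewrite /R /avoiding ab !nS.
case uS : (u \in S).
  rewrite (_ : [set y | (u, y) \in ~: route_hitting S] = set0) ?cards0 //.
  apply/setP => v; rewrite [in RHS]inE; apply/negP; rewrite inE => /missing [].
  by rewrite uS.
apply: leq_trans (Hbal u (negbT uS)); rewrite leq_mul2l.
apply/orP; right; apply: subset_leq_card; apply/subsetP => v; rewrite !inE => H.
by have [] := missing v; rewrite ?inE.
Qed.

Lemma card_grid_separator (S : {set V}) (m : nat) : 0 < d -> (forall i, n i <= m) ->
  balanced_separator (cart_adj n) S -> #|V| <= 2 * #|S| * (d * m).
Proof.
move=> d0 Hm Hbal.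
have good := card_route_missing d0 Hbal.
have bad := card_route_hitting S Hm.
have C := cardsC (route_hitting S); rewrite card_prod in C.
have [-> // | V0] := posnP #|V|.
rewrite -(leq_pmul2l V0).
move: bad; set b := #|route_hitting S|; set g := #|~: _| in good C.
rewrite -C in good *; move=> bad; nia.
Qed.

End Grid.

Lemma card_path_arcs m : #|[set a : 'I_m * 'I_m | path_adj a.1 a.2]| = 2 * (#|'I_m| - 1).
Proof.
rewrite card_ord; case: m => [|m].
  apply/eqP; rewrite cards_eq0; apply/eqP/setP => -[[]] //.
pose up (t : 'I_m) : 'I_m.+1 * 'I_m.+1 := (widen_ord (leqnSn m) t, lift ord0 t).
pose down (t : 'I_m) : 'I_m.+1 * 'I_m.+1 := (lift ord0 t, widen_ord (leqnSn m) t).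
have up_inj : injective up by move=> a b [/val_inj].
have down_inj : injective down by move=> a b [_ /val_inj].
have E : [set a : 'I_m.+1 * 'I_m.+1 | path_adj a.1 a.2] = up @: setT :|: down @: setT.
  apply/setP => -[a b]; rewrite !inE /path_adj /=; apply/idP/idP.
    case/orP => /eqP E.
      have {}E : (a : nat) = b.+1 := E.
      have bm : b < m by rewrite -ltnS -E ltn_ord.
      apply/orP; right; apply/imsetP; exists (Ordinal bm) => //.
      by congr pair; apply: ord_inj; rewrite /= ?lift0 ?E.
    have {}E : (b : nat) = a.+1 := E.
    have am : a < m by rewrite -ltnS -E ltn_ord.
    apply/orP; left; apply/imsetP; exists (Ordinal am) => //.
    by congr pair; apply: ord_inj; rewrite /= ?lift0 ?E.
  by case/orP => /imsetP [t _ [-> ->]]; rewrite /= ?lift0 /= eqxx ?orbT.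
have D : [disjoint up @: setT & down @: setT].
  rewrite -setI_eq0; apply/eqP/setP => -[a b]; rewrite !inE.
  apply/negP => /andP [/imsetP [t _ [a1 b1]] /imsetP [s _ [a2 b2]]].
  move: (congr1 val a1) (congr1 val b1) (congr1 val a2) (congr1 val b2).
  rewrite /= /bump /=; lia.
rewrite E; move: D; rewrite -setI_eq0 cardsU => /eqP ->.
by rewrite cards0 subn0 !card_imset // cardsT card_ord subn1 /=; lia.
Qed.

Lemma path_tree m : 0 < m -> is_tree (fun a b : 'I_m => path_adj a b).
Proof.
move=> m0; have path_sym : symmetric (fun a b : 'I_m => path_adj a b).
  by move=> a b; rewrite /path_adj orbC.
split => //; last exact: card_path_arcs.
  by move=> a; rewrite /path_adj orbb; apply/negbTE; rewrite ltn_eqF.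
have from0 (y : 'I_m) : connect (fun a b : 'I_m => path_adj a b) (Ordinal m0) y.
  case: y => t; elim: t => [|t IH] ht; first by rewrite (_ : Ordinal ht = Ordinal m0)
    ?connect0 //; apply: ord_inj.
  apply: connect_trans (IH (ltnW ht)) (connect1 _).
  by rewrite /path_adj /= eqxx orbT.
move=> x y; apply: connect_trans (from0 y).
by rewrite (sym_connect_sym path_sym) from0.
Qed.

Section StrongUpperBound.
Variables (d : nat) (n : 'I_d -> nat).
Notation V := (grid_vertex n).

Lemma card_coord_fiber (i0 : 'I_d) (c : nat) :
  #|[set x : V | (x i0 : nat) == c]| <= \prod_(j | j != i0) n j.
Proof.
pose F (j : 'I_d) := [pred y : 'I_(n j) | (j != i0) || ((y : nat) == c)].
have H : #|[set x : V | (x i0 : nat) == c]| <= #|(finfun.family F : simpl_pred V)|.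
  apply: subset_leq_card; apply/subsetP => x; rewrite inE => xc.
  by apply/familyP => j; rewrite /F /= inE; case: eqVneq => [->|].
apply: (leq_trans H); rewrite card_family foldrE big_map big_enum /= (bigD1 i0) //=.
rewrite -[X in _ <= X]mul1n; apply: leq_mul.
  apply/card_le1_eqP => a b; rewrite /in_mem /= eqxx /= => /eqP a1 /eqP b1.
  by apply/eqP; rewrite -val_eqE /= a1 b1.
apply: leq_prod => j ji; apply: leq_trans (max_card _) _.
by rewrite card_ord.
Qed.

Lemma strong_has_td_width (i0 : 'I_d) : 0 < n i0 ->
  has_td_width (strong_adj n) (2 * \prod_(j | j != i0) n j).
Proof.
move=> n0; pose bag (t : 'I_(n i0)) :=
  [set x : V | ((x i0 : nat) == t) || ((x i0 : nat) == t.+1)].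
exists 'I_(n i0), (fun a b : 'I_(n i0) => path_adj a b), bag; split; last first.
  move=> t; apply: leq_trans (leqnSn _).
  have -> : bag t = [set x : V | (x i0 : nat) == t] :|: [set x : V | (x i0 : nat) == t.+1].
    by apply/setP => x; rewrite !inE.
  apply: leq_trans (leq_card_setU _ _).1 _; rewrite mul2n -addnn.
  by apply: leq_add; apply: card_coord_fiber.
split; first exact: path_tree.
- by move=> x; exists (x i0); rewrite inE eqxx.
- move=> x y /andP [_ /forallP /(_ i0) H].
  exists (if (x i0 : nat) <= y i0 then x i0 else y i0); rewrite !inE.
  move: H; rewrite /path_adj; case: leqP; rewrite eqxx /= ?andbT;
  move: (nat_of_ord (x i0)) (nat_of_ord (y i0)) => a b; lia.
- move=> v i j; rewrite !inE => vi vj.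
  have [-> | ij] := eqVneq i j; first exact: connect0.
  apply: connect1; rewrite /= !inE vi vj !andbT /path_adj.
  move: ij; rewrite -val_eqE /=; lia.
Qed.

End StrongUpperBound.

Lemma treewidth_cart_lower d (n : 'I_d -> nat) (i0 : 'I_d) :
  (forall i, 0 < n i) -> (forall i, n i <= n i0) -> 2 <= n i0 ->
  \prod_(j | j != i0) n j <= 4 * d * treewidth (cart_adj n).
Proof.
move=> n_pos n_max n2; set k := treewidth (cart_adj n); set P := \prod_(j | _) _.
have d0 : 0 < d by apply: leq_ltn_trans (ltn_ord i0).
pose x0 : grid_vertex n := [ffun i => Ordinal (n_pos i)].
have k_pos : 0 < k.
  pose x := set_coord x0 i0 0; pose y := set_coord x0 i0 1.
  have xi : (x i0 : nat) = 0 by rewrite set_coordE eqxx ltnW.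
  have yi : (y i0 : nat) = 1 by rewrite set_coordE eqxx n2.
  apply: (@treewidth_gt0 _ _ x y); last by apply/eqP => xy; move: yi; rewrite -xy xi.
  apply/existsP; exists i0; rewrite /path_adj xi yi /=.
  by apply/forallP => j; apply/implyP => ji; rewrite !set_coordE (negbTE ji).
have [I [e [B [td Hk]]]] := treewidth_spec (cart_adj n).
have [c Hc] := balanced_separator_bag td x0.
have := card_grid_separator d0 n_max Hc.
rewrite card_grid_vertex (bigD1 i0) //= -/P => HV.
have : n i0 * P <= n i0 * (2 * k.+1 * d).
  apply: leq_trans HV _; rewrite [n i0 * _]mulnC mulnA leq_mul2r.
  by rewrite leq_mul2r leq_mul2l Hk !orbT.
rewrite leq_pmul2l ?(leq_trans _ n2) // => HP; apply: leq_trans HP _; nia.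
Qed.

Theorem mainTheorem11 (d : nat) (hd : 2 <= d) :
  exists c1 c2 : R, (0 < c1)%R /\ (0 < c2)%R /\
    forall n : 'I_d -> nat,
      (forall i j : 'I_d, i <= j -> n j <= n i) ->
      (forall i : 'I_d, 1 <= n i) ->
      (forall i : 'I_d, nat_of_ord i = 0 -> 2 <= n i) ->
      let P := \prod_(j < d | 0 < nat_of_ord j) n j in
      (c1 * INR P <= INR (treewidth (cart_adj n)))%R /\
      treewidth (cart_adj n) <= treewidth (strong_adj n) /\
      (INR (treewidth (strong_adj n)) <= c2 * INR P)%R.
Proof.
have d0 : 0 < d by apply: ltnW.
have dR : (0 < INR d)%R by apply: lt_0_INR; apply/ltP.
exists (/ (4 * INR d))%R, 2%R; split; first by apply: Rinv_0_lt_compat; lra.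
split; first lra.
move=> n n_sorted n_pos n0_ge2 P; pose i0 : 'I_d := Ordinal d0.
have -> : P = \prod_(j | j != i0) n j by apply: eq_bigl => j; rewrite -val_eqE /= lt0n.
split.
  have n_max i : n i <= n i0 by apply: n_sorted.
  have /leP/le_INR := treewidth_cart_lower n_pos n_max (n0_ge2 i0 erefl).
  rewrite !mult_INR /= => lb.
  apply: Rle_trans (Rmult_le_compat_l _ _ _ _ lb) _.
    by left; apply: Rinv_0_lt_compat; lra.
  by right; field; lra.
split; first exact: treewidth_subrel (@cart_subrel_strong d n).
have /leP/le_INR := treewidth_min (strong_has_td_width (n_pos i0)).
by rewrite mult_INR.
Qed.
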